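(* Let $X_\lambda$ be a cellular multipointed $d$-space and $\gamma$ an execution path of $X_\lambda$. Then the globular naturalization $\mathrm{natgl}(\gamma)$ of $\gamma$ is a regular path.
   Context: $\mathcal{M}(\ell,\ell')$ denotes the set of non-decreasing surjective continuous maps $[0,\ell]\to[0,\ell']$. Moore composition $*$ concatenates paths $[0,\ell_1]\to U$ and $[0,\ell_2]\to U$ into a path $[0,\ell_1+\ell_2]\to U$; normalized composition of $\gamma_1,\gamma_2:[0,1]\to U$ is $\gamma_1*_N\gamma_2(t)=\gamma_1(2t)$ for $t\le1/2$, $\gamma_2(2t-1)$ for $t\ge1/2$. A multipointed $d$-space is $(|X|,X^0,\mathbb{P}^{\mathrm{top}}X)$: a space, a set of states $X^0\subset|X|$, a set of continuous maps $[0,1]\to|X|$ (execution paths) with endpoints in $X^0$, closed under precomposition by $\mathcal{M}(1,1)$ and normalized composition; maps preserve states and execution paths. For a space $Z$, $\mathrm{Glob}^{\mathrm{top}}(Z)$ is the multipointed $d$-space whose underlying space is the quotient of $\{0,1\}\sqcup Z\times[0,1]$ identifying $(z,0)$ with $0$ and $(z,1)$ with $1$ for all $z$, whose states are $\{0,1\}$, and whose execution paths are $\delta_z\phi$ with $z\in Z$, $\phi\in\mathcal{M}(1,1)$, $\delta_z(t)=(z,t)$. $\mathbf{D}^n$ is the closed $n$-disk, $\mathbf{S}^{n-1}$ its boundary sphere ($\mathbf{D}^0$ a point, $\mathbf{S}^{-1}=\varnothing$). A cellular multipointed $d$-space is the colimit $X_\lambda=\varinjlim_{\nu<\lambda}X_\nu$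 of a colimit-preserving functor $\nu\mapsto X_\nu$ on an ordinal $\lambda$ such that $X_0=(X^0,X^0,\varnothing)$ for a set $X^0$, and for each $\nu<\lambda$, $X_{\nu+1}$ is the pushout of $\mathrm{Glob}^{\mathrm{top}}(\mathbf{S}^{n_\nu-1})\to\mathrm{Glob}^{\mathrm{top}}(\mathbf{D}^{n_\nu})$ (induced by the inclusion) along some map $g_\nu:\mathrm{Glob}^{\mathrm{top}}(\mathbf{S}^{n_\nu-1})\to X_\nu$, $n_\nu\ge0$; let $\widehat{g_\nu}:\mathrm{Glob}^{\mathrm{top}}(\mathbf{D}^{n_\nu})\to X_\lambda$ be the induced map. Known fact (used to define $\mathrm{natgl}$): every execution path $\gamma$ of $X_\lambda$ has a unique decomposition $\gamma=\mathrm{natgl}(\gamma)\phi$ with $\mathrm{natgl}(\gamma)=(\widehat{g_{\nu_1}}\delta_{z_1})*\dots*(\widehat{g_{\nu_n}}\delta_{z_n})$, $n\ge1$, $\nu_i<\lambda$, $z_i\in\mathbf{D}^{n_{\nu_i}}\setminus\mathbf{S}^{n_{\nu_i}-1}$, and $\phi\in\mathcal{M}(1,n)$; $\mathrm{natgl}(\gamma)$ is called the globular naturalization of $\gamma$. A Moore path $\gamma:[0,L]\to U$ is regular if it is constant, or if whenever $[a,b]\subset[0,L]$ and $\gamma$ restricted to $[a,b]$ is constant, then $a=b$. *)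

From HB Require Import structures.
From mathcomp Require Import all_boot all_order all_algebra.
From mathcomp Require Import all_classical all_reals topology normedtype.
Import Order.TTheory GRing.Theory Num.Theory numFieldNormedType.Exports.
Local Open Scope classical_set_scope.
Local Open Scope ring_scope.

(* Conventions.  A path [0,l] -> U is represented by a function R -> U;    *)
(* only its values on [0,l] matter.  Continuity is continuity of the       *)

Definition reparam {R : realType} (l l' : R) (phi : R -> R) : Prop :=
  [/\ {within `[0, l]%classic, continuous phi},
      (forall t, t \in `[0, l] -> phi t \in `[0, l']),
      (forall s t, s \in `[0, l] -> t \in `[0, l] -> s <= t -> phi s <= phi t)
    & (forall u, u \in `[0, l'] -> exists2 t, t \in `[0, l] & phi t = u)].

Definition moore_comp {R : realType} {U : Type} (l1 : R) (g1 g2 : R -> U) : R -> U :=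
  fun t => if t <= l1 then g1 t else g2 (t - l1).

Fixpoint moore_concat {R : realType} {U : Type} (p : R -> U) (qs : seq (R -> U))
  : R -> U :=
  match qs with
  | [::] => p
  | q :: qs' => moore_comp 1 p (moore_concat q qs')
  end.

Definition norm_comp {R : realType} {U : Type} (g1 g2 : R -> U) : R -> U :=
  fun t => if t <= 2^-1 then g1 (2 * t) else g2 (2 * t - 1).

Definition regular_path {R : realType} {U : Type} (L : R) (g : R -> U) : Prop :=
  (exists u, forall t, t \in `[0, L] -> g t = u) \/
  (forall a b, 0 <= a -> a <= b -> b <= L ->
     (forall s t, s \in `[a, b] -> t \in `[a, b] -> g s = g t) -> a = b).

Record mdspace (R : realType) := MDSpace {
  mds_car : topologicalType;
  mds_states : set mds_car;
  mds_paths : set (R -> mds_car);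
  (* representation convention: a path is determined by its values on [0,1] *)
  mds_paths_ext : forall g g', mds_paths g ->
     (forall t, t \in `[0, 1] -> g t = g' t) -> mds_paths g';
  mds_paths_cont : forall g, mds_paths g -> {within `[0, 1]%classic, continuous g};
  mds_paths_ends : forall g, mds_paths g ->
     mds_states (g 0) /\ mds_states (g 1);
  mds_paths_reparam : forall g phi, mds_paths g -> reparam 1 1 phi ->
     mds_paths (g \o phi);
  mds_paths_comp : forall g1 g2, mds_paths g1 -> mds_paths g2 ->
     g1 1 = g2 0 -> mds_paths (norm_comp g1 g2) }.
Arguments mds_car {R} m.
Arguments mds_states {R} m _.
Arguments mds_paths {R} m _.

Definition mds_map {R : realType} {X Y : mdspace R}
    (f : mds_car X -> mds_car Y) : Prop :=
  [/\ continuous f,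
      (forall x, mds_states X x -> mds_states Y (f x))
    & (forall g, mds_paths X g -> mds_paths Y (f \o g))].

Definition sqnorm {R : realType} {n : nat} (z : 'rV[R]_n) : R :=
  \sum_(i < n) z ord0 i ^+ 2.
Definition disk (R : realType) (n : nat) : set 'rV[R]_n := [set z | sqnorm z <= 1].
Definition sphere (R : realType) (n : nat) : set 'rV[R]_n := [set z | sqnorm z = 1].
Arguments disk R n : clear implicits.
Arguments sphere R n : clear implicits.
Definition open_disk (R : realType) (n : nat) : set 'rV[R]_n := [set z | sqnorm z < 1].
Arguments open_disk R n : clear implicits.

(* Maps Glob^top(Z) -> X, for Z a subset of R^n.  By the universal        *)
(* property of the quotient |Glob^top(Z)| of {0,1} + Z x [0,1], such a map *)
(* is the same as the images a, b of the states 0, 1 and a continuous map  *)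
(* h : Z x [0,1] -> |X| (the composite with the quotient map), with        *)
(* h(z,0) = a, h(z,1) = b.  It is a map of multipointed d-spaces iff a, b  *)
(* are states and every h(z, phi(-)), phi in M(1,1), is an execution path. *)
(* Two such maps are equal iff a, b agree and h agrees on Z x [0,1].       *)
Definition glob_map {R : realType} {n : nat} (Z : set 'rV[R]_n) {X : mdspace R}
    (a b : mds_car X) (h : 'rV[R]_n -> R -> mds_car X) : Prop :=
  [/\ mds_states X a, mds_states X b,
      {within Z `*` `[0, 1]%classic, continuous (fun p : 'rV[R]_n * R => h p.1 p.2)},
      (forall z, Z z -> h z 0 = a /\ h z 1 = b)
    & (forall z phi, Z z -> reparam 1 1 phi -> mds_paths X (h z \o phi))].

(* Cellular towers indexed by a well-ordered type W whose greatest         *)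
(* element top plays the role of lambda (so W ~ lambda + 1).               *)
Definition is_succ {d} {W : orderType d} (nu nu' : W) : Prop :=
  (nu < nu')%O /\ ~ (exists xi, (nu < xi)%O /\ (xi < nu')%O).

Definition is_limit {d} {W : orderType d} (nu : W) : Prop :=
  (exists mu, (mu < nu)%O) /\ ~ (exists mu, is_succ mu nu).

Definition initial_stage {R : realType} (X : mdspace R) : Prop :=
  [/\ (forall A : set (mds_car X), open A),
      mds_states X = setT
    & mds_paths X = set0].

Definition is_functor {R : realType} {d} {W : orderType d} (X : W -> mdspace R)
    (tr : forall mu nu : W, (mu <= nu)%O -> mds_car (X mu) -> mds_car (X nu))
    : Prop :=
  [/\ (forall mu nu (h : (mu <= nu)%O), mds_map (tr mu nu h)),
      (forall mu (h : (mu <= mu)%O) x, tr mu mu h x = x)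
    & (forall mu nu xi (h1 : (mu <= nu)%O) (h2 : (nu <= xi)%O) (h3 : (mu <= xi)%O) x,
         tr nu xi h2 (tr mu nu h1 x) = tr mu xi h3 x)].

Definition is_chain_colimit {R : realType} {d} {W : orderType d}
    (X : W -> mdspace R)
    (tr : forall mu nu : W, (mu <= nu)%O -> mds_car (X mu) -> mds_car (X nu))
    (nu : W) : Prop :=
  forall (Y : mdspace R) (c : forall mu : W, mds_car (X mu) -> mds_car Y),
    (forall mu, (mu < nu)%O -> mds_map (c mu)) ->
    (forall mu mu' (h : (mu <= mu')%O), (mu' < nu)%O ->
        forall x, c mu' (tr mu mu' h x) = c mu x) ->
    exists u : mds_car (X nu) -> mds_car Y,
      [/\ mds_map u,
          (forall mu (h : (mu <= nu)%O), (mu < nu)%O ->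
             forall x, u (tr mu nu h x) = c mu x)
        & (forall u' : mds_car (X nu) -> mds_car Y, mds_map u' ->
             (forall mu (h : (mu <= nu)%O), (mu < nu)%O ->
                forall x, u' (tr mu nu h x) = c mu x) ->
             u' = u)].

Definition is_cell_pushout {R : realType} {n : nat} {Xn Xn' : mdspace R}
    (f : mds_car Xn -> mds_car Xn')
    (a b : mds_car Xn) (g : 'rV[R]_n -> R -> mds_car Xn)
    (a' b' : mds_car Xn') (G : 'rV[R]_n -> R -> mds_car Xn') : Prop :=
  [/\ glob_map (sphere R n) a b g,
      glob_map (disk R n) a' b' G,
      mds_map f,
      (f a = a' /\ f b = b' /\
       forall z t, sphere R n z -> t \in `[0, 1] -> f (g z t) = G z t)
    & forall (Y : mdspace R) (k : mds_car Xn -> mds_car Y)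
             (c e : mds_car Y) (K : 'rV[R]_n -> R -> mds_car Y),
        mds_map k -> glob_map (disk R n) c e K ->
        k a = c -> k b = e ->
        (forall z t, sphere R n z -> t \in `[0, 1] -> k (g z t) = K z t) ->
        exists u : mds_car Xn' -> mds_car Y,
          [/\ mds_map u,
              (forall x, u (f x) = k x),
              (u a' = c /\ u b' = e /\
               forall z t, disk R n z -> t \in `[0, 1] -> u (G z t) = K z t)
            & (forall u' : mds_car Xn' -> mds_car Y, mds_map u' ->
                 (forall x, u' (f x) = k x) ->
                 (u' a' = c /\ u' b' = e /\
                  forall z t, disk R n z -> t \in `[0, 1] -> u' (G z t) = K z t) ->
                 u' = u)]].

(* A cellular multipointed d-space, presented as in the paper:
   - W is a well-ordered type with least element bot (the ordinal 0) and
     greatest element top (the ordinal lambda), i.e. W ~ lambda + 1;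
     X top is the cellular multipointed d-space X_lambda;
   - nu |-> X nu is a functor (transition maps tr), X bot = (X^0, X^0, empty);
   - at every limit element nu, X nu = colim_{mu < nu} X mu (this includes
     nu = top when lambda is a limit ordinal);
   - for every nu < top, with successor nu', X nu' is the pushout of
     Glob(S^{nn nu - 1}) -> Glob(D^{nn nu}) along some g_nu : Glob(S^{nn nu-1})
     -> X nu; ghat nu is the induced map Glob(D^{nn nu}) -> X top (given by
     its values hg nu on D^{nn nu} x [0,1], cf. glob_map), i.e. the composite
     of the pushout leg Glob(D^{nn nu}) -> X nu' with tr nu' top. *)
Definition cellular_presentation {R : realType} {d} {W : orderType d}
    (bot top : W) (X : W -> mdspace R)
    (tr : forall mu nu : W, (mu <= nu)%O -> mds_car (X mu) -> mds_car (X nu))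
    (nn : W -> nat)
    (hg : forall nu : W, (nu < top)%O -> 'rV[R]_(nn nu) -> R -> mds_car (X top))
    : Prop :=
  [/\ well_founded (fun x y : W => (x < y)%O),
      (forall nu : W, (bot <= nu)%O) /\ (forall nu : W, (nu <= top)%O),
      initial_stage (X bot) /\ is_functor X tr,
      (forall nu : W, is_limit nu -> is_chain_colimit X tr nu)
    & (forall (nu nu' : W), is_succ nu nu' ->
        forall (hlt : (nu < top)%O) (hle : (nu' <= top)%O) (hs : (nu <= nu')%O),
        exists (a b : mds_car (X nu)) (g : 'rV[R]_(nn nu) -> R -> mds_car (X nu))
               (G : 'rV[R]_(nn nu) -> R -> mds_car (X nu')),
          is_cell_pushout (tr nu nu' hs) a b g (tr nu nu' hs a) (tr nu nu' hs b) G
          /\ (forall z t, disk R (nn nu) z -> t \in `[0, 1] ->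
                 tr nu' top hle (G z t) = hg nu hlt z t))].

(* A point of the globular naturalization: an index nu < top and a point z
   of D^{nn nu}; its path is ghat_nu delta_z : t |-> ghat_nu (z, t). *)
Definition cellpt (R : realType) {d} {W : orderType d} (top : W) (nn : W -> nat)
  := {nu : W & {hlt : (nu < top)%O & 'rV[R]_(nn nu)}}.

Definition cell_path {R : realType} {d} {W : orderType d} {top : W} {nn : W -> nat}
    {C : Type} (hg : forall nu : W, (nu < top)%O -> 'rV[R]_(nn nu) -> R -> C)
    (p : @cellpt R d W top nn) : R -> C :=
  hg (projT1 p) (projT1 (projT2 p)) (projT2 (projT2 p)).

Definition cell_interior {R : realType} {d} {W : orderType d} {top : W}
    {nn : W -> nat} (p : @cellpt R d W top nn) : Prop :=
  open_disk R (nn (projT1 p)) (projT2 (projT2 p)).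

Definition natgl_path {R : realType} {d} {W : orderType d} {top : W} {nn : W -> nat}
    {C : Type} (hg : forall nu : W, (nu < top)%O -> 'rV[R]_(nn nu) -> R -> C)
    (p0 : @cellpt R d W top nn) (ps : seq (@cellpt R d W top nn)) : R -> C :=
  moore_concat (cell_path hg p0) (map (cell_path hg) ps).

From HB Require Import structures.
From mathcomp Require Import all_boot all_order all_algebra.
From mathcomp Require Import all_classical all_reals topology normedtype.
From mathcomp Require Import lra.
Import Order.TTheory GRing.Theory Num.Theory numFieldNormedType.Exports.
Local Open Scope classical_set_scope.
Local Open Scope ring_scope.

(* natgl(gamma) is a Moore composite of paths t |-> ghat_nu(z, t) with z in
   an open disk, so it is regular as soon as each of them is injective on
   ]0, 1[.  Injectivity is detected by maps into indiscrete multipointed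
   d-spaces, into which every function is a map: the universal property of a
   cell attachment shows that the leg X_nu -> X_(nu+1) is injective and that
   the cell is injective on (open disk) x ]0, 1[; that of a chain colimit
   shows that a colimit of injections has injective legs; well-founded
   induction then makes every transition map injective. *)

Definition indiscrete (T : choiceType) : topologicalType :=
  initial_topology (fun _ : T => true).

Lemma continuous_indiscrete (S : topologicalType) (T : choiceType)
    (f : S -> indiscrete T) :
  continuous f.
Proof. by apply: continuous_comp_initial; exact: cst_continuous. Qed.

Definition indiscrete_mds (R : realType) (T : choiceType) : mdspace R.
Proof.
refine (@MDSpace R (indiscrete T) setT setT _ _ _ _ _) => // g _.
exact: continuous_indiscrete.
Defined.

Lemma mds_map_indiscrete {R : realType} {T : choiceType} {X : mdspace R}
    (f : mds_car X -> T) :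
  @mds_map R X (indiscrete_mds R T) f.
Proof. by split=> //; exact: continuous_indiscrete. Qed.

Lemma glob_map_indiscrete (R : realType) (T : choiceType) (n : nat)
    (Z : set 'rV[R]_n) (a b : T) (h : 'rV[R]_n -> R -> T) :
  (forall z, Z z -> h z 0 = a /\ h z 1 = b) ->
  @glob_map R n Z (indiscrete_mds R T) a b h.
Proof. by split=> //; exact: continuous_indiscrete. Qed.

Section CellPushout.
Context {R : realType} {n : nat} {Xn Xn' : mdspace R}.
Context {f : mds_car Xn -> mds_car Xn'} {a b : mds_car Xn}.
Context {g : 'rV[R]_n -> R -> mds_car Xn} {a' b' : mds_car Xn'}.
Context {G : 'rV[R]_n -> R -> mds_car Xn'}.
Hypothesis PO : is_cell_pushout f a b g a' b' G.

(* Extend [id] over the cell by collapsing it onto the attaching map. *)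
Lemma cell_pushout_leg_inj : injective f.
Proof.
case: PO => [[_ _ _ g_ends _] _ _ _ univ].
pose K z t := if `[< sphere R n z >] then g z t else if t == 1 then b else a.
have K_glob : @glob_map R n (disk R n) (indiscrete_mds R (mds_car Xn)) a b K.
  apply: glob_map_indiscrete => z _; rewrite /K.
  case: asboolP => [/g_ends//|_]; by rewrite eqxx eq_sym oner_eq0.
have K_sphere z t : sphere R n z -> t \in `[0, 1] -> id (g z t) = K z t.
  by move=> z_sphere _; rewrite /K asboolT.
have [u [_ u_f _ _]] := univ (indiscrete_mds R (mds_car Xn)) id a b K
  (mds_map_indiscrete _) K_glob erefl erefl K_sphere.
by move=> x y /(congr1 u); rewrite !u_f.
Qed.

(* Collapse [Xn] to a point and read off the time coordinate inside the cell. *)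
Lemma cell_pushout_cell_inj z :
  open_disk R n z -> {in `]0, 1[ &, injective (G z)}.
Proof.
case: PO => [_ _ _ _ univ] z_open s t s01 t01.
pose K (z : 'rV[R]_n) (t : R) : R :=
  if (sqnorm z < 1) && (t \in `]0, 1[) then t else 0.
have K_glob : @glob_map R n (disk R n) (indiscrete_mds R R) 0 0 K.
  by apply: glob_map_indiscrete => z' _; rewrite /K !in_itv /= !ltxx !andbF.
have K_sphere z' t' : sphere R n z' -> t' \in `[0, 1] -> 0 = K z' t'.
  by move=> z'_sphere _; rewrite /K /= z'_sphere ltxx.
have [u [_ _ [_ [_ u_G]] _]] := univ (indiscrete_mds R R) (fun=> 0) 0 0 K
  (mds_map_indiscrete _) K_glob erefl erefl K_sphere.
have z_disk : disk R n z by exact: ltW.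
have in01 r : r \in `]0, 1[ -> r \in `[0, 1] by exact: subset_itv_oo_cc.
move=> /(congr1 u); rewrite !u_G ?in01 // /K.
by rewrite z_open s01 t01.
Qed.

End CellPushout.

(* The cocone sends [w] to the set of [x] that eventually become equal to it:
   the colimit cocone of the underlying sets. *)
Lemma chain_colimit_tr_inj (R : realType) (d : Order.disp_t) (W : orderType d)
    (X : W -> mdspace R)
    (tr : forall mu nu : W, (mu <= nu)%O -> mds_car (X mu) -> mds_car (X nu))
    (xi mu : W) (h : (mu <= xi)%O) :
  is_functor X tr -> is_chain_colimit X tr xi -> (mu < xi)%O ->
  (forall m (hm : (mu <= m)%O), (m < xi)%O -> injective (tr mu m hm)) ->
  injective (tr mu xi h).
Proof.
move=> [_ _ tr_comp] colim mu_xi tr_inj.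
pose c m (w : mds_car (X m)) : set (mds_car (X mu)) := [set x |
  exists m' (h1 : (mu <= m')%O) (h2 : (m <= m')%O),
    (m' < xi)%O /\ tr mu m' h1 x = tr m m' h2 w].
have c_tr m1 m2 (h12 : (m1 <= m2)%O) : (m2 < xi)%O ->
    forall w, c m2 (tr m1 m2 h12 w) = c m1 w.
  move=> m2_xi w; apply/seteqP; split=> x [m' [h1 [h2 [m'_xi e]]]].
    exists m', h1, (le_trans h12 h2); split=> //; rewrite e; exact: tr_comp.
  pose m'' := Order.max m' m2.
  have h' : (m' <= m'')%O by rewrite le_max lexx.
  have h2' : (m2 <= m'')%O by rewrite le_max lexx orbT.
  exists m'', (le_trans h1 h'), h2'; split; first by rewrite gt_max m'_xi.
  by rewrite -(tr_comp _ _ _ h1 h') e !(tr_comp _ _ _ _ _ (le_trans h2 h')).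
have [u [_ u_tr _]] := colim (indiscrete_mds R (set (mds_car (X mu)))) c
  (fun m _ => mds_map_indiscrete _) c_tr.
move=> x y /(congr1 u); rewrite !u_tr // => cxy.
have : c mu x x by exists mu, (lexx mu), (lexx mu).
rewrite cxy => -[m' [h1 [h2 [m'_xi]]]].
by rewrite (eq_irrelevance h2 h1); exact: (tr_inj m' h1 m'_xi).
Qed.

Lemma exists_succ {d : Order.disp_t} {W : orderType d} {nu m : W} :
  well_founded (fun x y : W => (x < y)%O) -> (nu < m)%O ->
  exists nu', is_succ nu nu'.
Proof.
move=> lt_wf; elim/(well_founded_ind lt_wf): m => m IH nu_m.
have [[m' [m'_m nu_m']]|no_between] :=
  pselect (exists m', (m' < m)%O /\ (nu < m')%O).
  exact: IH m'_m nu_m'.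
by exists m; split=> // -[m' [nu_m' m'_m]]; apply: no_between; exists m'.
Qed.

Section CellularTower.
Context {R : realType} {d : Order.disp_t} {W : orderType d} {bot top : W}.
Context {X : W -> mdspace R} {nn : W -> nat}.
Context {tr : forall mu nu : W, (mu <= nu)%O -> mds_car (X mu) -> mds_car (X nu)}.
Context {hg : forall nu : W, (nu < top)%O -> 'rV[R]_(nn nu) -> R -> mds_car (X top)}.
Hypothesis CP : cellular_presentation bot top X tr nn hg.

Let lt_wf : well_founded (fun x y : W => (x < y)%O).
Proof. by case: CP. Qed.

Let le_top (nu : W) : (nu <= top)%O.
Proof. by case: CP => _ [_ ->]. Qed.

Let functor_tr : is_functor X tr.
Proof. by case: CP => _ _ []. Qed.

Let tr_id (mu : W) (h : (mu <= mu)%O) x : tr mu mu h x = x.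
Proof. by case: functor_tr => _ ->. Qed.

Let tr_comp {m1 m2 m3 : W} (h1 : (m1 <= m2)%O) (h2 : (m2 <= m3)%O)
    (h3 : (m1 <= m3)%O) x :
  tr m2 m3 h2 (tr m1 m2 h1 x) = tr m1 m3 h3 x.
Proof. by case: functor_tr => _ _ ->. Qed.

Let succ_pushout {nu nu' : W} (hs : (nu <= nu')%O) (hlt : (nu < top)%O) :
  is_succ nu nu' ->
  exists (a b : mds_car (X nu)) (g : 'rV[R]_(nn nu) -> R -> mds_car (X nu))
         (G : 'rV[R]_(nn nu) -> R -> mds_car (X nu')),
    is_cell_pushout (tr nu nu' hs) a b g (tr nu nu' hs a) (tr nu nu' hs b) G
    /\ (forall z t, disk R (nn nu) z -> t \in `[0, 1] ->
          tr nu' top (le_top nu') (G z t) = hg nu hlt z t).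
Proof. by case: CP => _ _ _ _ push /push; apply. Qed.

Lemma tr_inj (mu xi : W) (h : (mu <= xi)%O) : injective (tr mu xi h).
Proof.
move: mu h; elim/(well_founded_ind lt_wf): xi => xi IH mu h.
have [mu_eq_xi|mu_ne_xi] := eqVneq mu xi.
  by subst xi => x y; rewrite !tr_id.
have mu_xi : (mu < xi)%O by rewrite lt_neqAle mu_ne_xi h.
have [[p [p_xi no_between]]|not_succ] := pselect (exists p, is_succ p xi).
  have mu_p : (mu <= p)%O.
    by rewrite leNgt; apply/negP => p_mu; apply: no_between; exists mu.
  have [a [b [g [G [push _]]]]] := succ_pushout (ltW p_xi)
    (lt_le_trans p_xi (le_top xi)) (conj p_xi no_between).
  move=> x y; rewrite -(tr_comp mu_p (ltW p_xi) h x) -(tr_comp mu_p (ltW p_xi) h y).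
  by move/(cell_pushout_leg_inj push)/(IH p p_xi).
have xi_limit : is_limit xi by split; first exists mu.
apply: chain_colimit_tr_inj => //; first by case: CP => _ _ _ colim _; apply: colim.
by move=> m hm m_xi; apply: IH.
Qed.

Lemma cell_path_inj (p : cellpt R top nn) :
  cell_interior p -> {in `]0, 1[ &, injective (cell_path hg p)}.
Proof.
case: p => nu [hlt z] /= z_open s t s01 t01; rewrite /cell_path /=.
have [nu' nu_succ] := exists_succ lt_wf hlt.
have [a [b [g [G [push G_hg]]]]] := succ_pushout (ltW nu_succ.1) hlt nu_succ.
have z_disk : disk R (nn nu) z by exact: ltW.
have in01 r : r \in `]0, 1[ -> r \in `[0, 1] by exact: subset_itv_oo_cc.
rewrite -!G_hg ?in01 // => /tr_inj.
exact: cell_pushout_cell_inj push z z_open s t s01 t01.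
Qed.

End CellularTower.

Section MooreConcat.
Context {R : realType} {U : Type}.

Lemma moore_concat_nth (p : R -> U) (fs : seq (R -> U)) (k : nat) (t : R) :
  (k <= size fs)%N -> k%:R < t <= k.+1%:R ->
  moore_concat p fs t = nth p (p :: fs) k (t - k%:R).
Proof.
elim: fs p k t => [|q fs IH] p k t /=.
  by rewrite leqn0 => /eqP -> _; rewrite subr0.
rewrite /moore_comp; case: k => [|k] k_le /andP[k_t t_k1].
  by rewrite t_k1 subr0.
have t_gt1 : 1 < t by apply: le_lt_trans k_t; rewrite -[1]/(1%:R) ler_nat.
rewrite leNgt t_gt1 /= (IH q k) //; last by move: k_t t_k1; rewrite -!nat1r; lra.
by rewrite (set_nth_default q) // -nat1r opprD addrA.
Qed.

(* Two distinct points of a nondegenerate [a, b] lie in the same unit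
   segment [k, k + 1] with k = floor a, where the k-th path is injective. *)
Lemma moore_concat_regular (p : R -> U) (fs : seq (R -> U)) :
  (forall k, (k <= size fs)%N -> {in `]0, 1[ &, injective (nth p (p :: fs) k)}) ->
  regular_path (size fs).+1%:R (moore_concat p fs).
Proof.
move=> fs_inj; right=> a b a_ge0 a_le_b b_le const.
apply/eqP; rewrite eq_le a_le_b /= leNgt; apply/negP => a_lt_b.
pose k := Num.truncn a.
have /andP[k_le_a a_lt_k1] : k%:R <= a < k.+1%:R := truncn_itv a_ge0.
have k_le : (k <= size fs)%N.
  by rewrite -ltnS truncn_lt_nat //; apply: lt_le_trans b_le.
pose c := Num.min b k.+1%:R.
have a_lt_c : a < c by rewrite lt_min a_lt_b a_lt_k1.
have c_le_b : c <= b by rewrite ge_min lexx.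
have c_le_k1 : c <= k.+1%:R by rewrite ge_min lexx orbT.
have in_seg r : a < r < c -> r - k%:R \in `]0, 1[.
  by move=> /andP[? ?]; rewrite in_itv /=; apply/andP; split; lra.
have in_ab r : a < r < c -> r \in `[a, b].
  by move=> /andP[? ?]; rewrite in_itv /=; apply/andP; split; lra.
have moore_seg r : a < r < c -> moore_concat p fs r = nth p (p :: fs) k (r - k%:R).
  by move=> /andP[? ?]; apply: moore_concat_nth => //; apply/andP; split; lra.
pose s := a + (c - a) / 3; pose t := a + (c - a) * 2 / 3.
have s_in : a < s < c by rewrite /s; apply/andP; split; lra.
have t_in : a < t < c by rewrite /t; apply/andP; split; lra.
have := const s t (in_ab s s_in) (in_ab t t_in).
rewrite !moore_seg // => /(fs_inj k k_le _ _ (in_seg s s_in) (in_seg t t_in)).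
rewrite /s /t; lra.
Qed.

End MooreConcat.

Theorem proposition4p8 (R : realType) (d : Order.disp_t) (W : orderType d)
  (bot top : W) (X : W -> mdspace R)
  (tr : forall mu nu : W, (mu <= nu)%O -> mds_car (X mu) -> mds_car (X nu))
  (nn : W -> nat)
  (hg : forall nu : W, (nu < top)%O -> 'rV[R]_(nn nu) -> R -> mds_car (X top)) :
  cellular_presentation bot top X tr nn hg ->
  forall gam : R -> mds_car (X top), mds_paths (X top) gam ->
  forall (p0 : cellpt R top nn) (ps : seq (cellpt R top nn)) (phi : R -> R),
    cell_interior p0 -> (forall i, (i < size ps)%N -> cell_interior (nth p0 ps i)) ->
    reparam 1 (size ps).+1%:R phi ->
    (forall t, t \in `[0, 1] -> gam t = natgl_path hg p0 ps (phi t)) ->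
    regular_path (size ps).+1%:R (natgl_path hg p0 ps).
Proof.
move=> CP _ _ p0 ps _ p0_int ps_int _ _.
rewrite /natgl_path -(size_map (cell_path hg) ps).
apply: moore_concat_regular => k; rewrite size_map => k_le.
rewrite -map_cons (nth_map p0) //; apply: (cell_path_inj CP).
by case: k k_le => [|k] //= k_lt; apply: ps_int.
Qed.
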